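(* Fix $a,b\in(0,1)$ and $n\in\mathbb{N}\cup\{\infty\}$. Consider the spread process $\{f_t\}$ with parameters $(\mathcal{P}_n,v_0,\mathcal{P}_n,a,b)$ and let $i_t$ be the index of the truth frontier after round $t$. Then for every $t\ge 1$ the random variable $i_t$ stochastically dominates $\min\{\mathrm{Bin}(t-1,b),\,n\}$, i.e. $\Pr[i_t\ge x]\ge \Pr[\min\{\mathrm{Bin}(t-1,b),n\}\ge x]$ for all real $x$. In particular, there exist constants $K,c_1,c_2,c_3>0$ depending only on $a,b$ such that for all $t\ge1$, $$\Pr\big[i_t\ \ge\ \min\{bt-Kt^{1-c_3},\,n\}\big]\ \ge\ 1-e^{-c_1t^{c_2}}.$$
   Context: Spread process. Fix $a,b\in[0,1]$. Let $G=(V,E)$ be a connected, locally finite, undirected graph (finite or countably infinite), $r\in V$ a root, and $T$ a breadth-first-search (BFS) spanning tree of $G$ rooted at $r$ (i.e. $d_T(r,v)=d_G(r,v)$ for all $v$). Orient $T$ away from $r$; for $v\ne r$ let $p(v)$ be its parent in $T$. The spread process with parameters $(G,r,T,a,b)$ is the random sequence of maps $f_t:V\to\{+1,-1,\bot\}$, $t\in\mathbb{N}$, defined by: $f_t(r)=+1$ for all $t$; $f_0(v)=\bot$ for $v\neq r$; for $t\ge1$ and each $v\ne r$, independently of everything else: if $f_{t-1}(v)=\bot\ne f_{t-1}(p(v))$ then $f_t(v)=f_{t-1}(p(v))$ with probability $1-a$ and $f_t(v)=-f_{t-1}(p(v))$ with probability $a$; if $f_{t-1}(v)\ne\bot$ then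 $f_t(v)=f_{t-1}(p(v))$ with probability $b$ and $f_t(v)=f_{t-1}(v)$ with probability $1-b$; if $f_{t-1}(v)=f_{t-1}(p(v))=\bot$ then $f_t(v)=\bot$. Path. For $n\in\mathbb{N}\cup\{\infty\}$, $\mathcal{P}_n$ is the path with vertices $v_0,v_1,\dots,v_n$ (infinitely many if $n=\infty$), rooted at $v_0$, with $p(v_i)=v_{i-1}$; it is its own BFS tree, and the process on it has parameters $(\mathcal{P}_n,v_0,\mathcal{P}_n,a,b)$. Truth frontier on the path. After round $t$, the truth frontier is the single node $v_{i_t}$ where $i_t=\max\{i: 0\le i\le n,\ f_t(v_0)=f_t(v_1)=\dots=f_t(v_i)=+1\}$. *)

From HB Require Import structures.
From mathcomp Require Import all_boot all_order all_algebra.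
From mathcomp Require Import reals sequences exp.
Set Implicit Arguments. Unset Strict Implicit. Unset Printing Implicit Defensive.
Import Order.TTheory GRing.Theory Num.Theory.
Local Open Scope ring_scope.

(* Opinions: None = bot, Some true = +1, Some false = -1. *)
Notation opinion := (option bool).

(* Path length n in N ∪ {∞}: Some m = finite path v_0..v_m, None = infinite. *)
Notation natinf := (option nat).

Section Spread.
Variable R : realType.
Variables (a b : R).

(* Probability that a (non-root) vertex with old parent opinion [p] and old own
   opinion [s] takes new opinion [x] in one round. *)
Definition vertex_step (p s x : opinion) : R :=
  match s with
  | None =>
      match p with
      | None => (x == None)%:R
      | Some sp => (1 - a) * (x == Some sp)%:R + a * (x == Some (~~ sp))%:R
      end
  | Some _ => b * (x == p)%:R + (1 - b) * (x == s)%:R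
  end.

(* Configurations on the finite path v_0, ..., v_N (vertex i has parent i-1). *)
Definition config (N : nat) := {ffun 'I_N.+1 -> opinion}.

Definition init_config (N : nat) : config N :=
  [ffun i : 'I_N.+1 => if val i == 0%N then Some true else None].

Definition step_prob (N : nat) (g h : config N) : R :=
  (h ord0 == Some true)%:R *
  \prod_(i : 'I_N.+1 | val i != 0%N) vertex_step (g (inord (val i).-1)) (g i) (h i).

Fixpoint spread_dist (N : nat) (t : nat) : config N -> R :=
  match t with
  | 0 => fun h => (h == init_config N)%:R
  | t'.+1 => fun h => \sum_(g : config N) @spread_dist N t' g * step_prob g h
  end.

Definition frontier (N : nat) (h : config N) : nat :=
  \max_(i : 'I_N.+1 | [forall j : 'I_N.+1, (j <= i)%N ==> (h j == Some true)]) val i.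

(* The vertices reached by time t: for the infinite path, the marginal of the
   process on v_0..v_(t+1) is the process on P_(t+1), and v_(t+1) is still bot
   at time t, so the frontier after round t is determined there. *)
Definition trunc (n : natinf) (t : nat) : nat :=
  match n with Some m => m | None => t.+1 end.

Definition prob_frontier_ge (n : natinf) (t : nat) (x : R) : R :=
  \sum_(h : config (trunc n t) | x <= (frontier h)%:R) @spread_dist (trunc n t) t h.

Definition minninf (k : nat) (n : natinf) : nat :=
  match n with Some m => minn k m | None => k end.

Definition minrinf (y : R) (n : natinf) : R :=
  match n with Some m => Num.min y m%:R | None => y end.

Definition prob_minbin_ge (m : nat) (n : natinf) (x : R) : R :=
  \sum_(k < m.+1 | x <= (minninf k n)%:R)
     'C(m, k)%:R * b ^+ k * (1 - b) ^+ (m - k).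

End Spread.

From HB Require Import structures.
From mathcomp Require Import all_boot all_order all_algebra.
From mathcomp Require Import reals sequences exp.
From mathcomp Require Import ring lra zify.
Import Order.TTheory GRing.Theory Num.Theory.
Local Open Scope ring_scope.
Set Implicit Arguments. Unset Strict Implicit. Unset Printing Implicit Defensive.

(* Write F_t(k) = Pr[i_t >= k] and G_m(k) = Pr[min(Bin(m, b), n) >= k].  The
   vertices v_0, ..., v_(i_t) are +1 with +1 parents, so they stay +1; when
   k <= t the vertex v_(i_t + 1) has already been reached, is -1, and copies
   its parent with probability b.  Hence
     F_(t+1)(k) >= (1 - b) F_t(k) + b F_t(k-1)   for 1 <= k <= min(t, n),
   whereas Pascal's rule gives G_(m+1)(k) <= (1 - b) G_m(k) + b G_m(k-1), and
   induction on t yields F_t >= G_(t-1).  The concentration bound is then the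
   Chernoff lower tail of Bin(t-1, b) taken at lambda = t^(-1/4). *)

Section Frontier.
Variables (N : nat) (h : config N).

Lemma leq_frontier m : (m <= N)%N ->
  (forall i : 'I_N.+1, (i <= m)%N -> h i = Some true) -> (m <= frontier h)%N.
Proof.
move=> le_mN htrue; rewrite -[m](@inordK N) ?ltnS //.
apply: leq_bigmax_cond; apply/forallP => j; apply/implyP => le_ji.
by apply/eqP/htrue; rewrite inordK ?ltnS in le_ji.
Qed.

Lemma frontier_true : h ord0 = Some true ->
  forall i : 'I_N.+1, (i <= frontier h)%N -> h i = Some true.
Proof.
move=> h0 i le_i.
have root_ok : [forall j : 'I_N.+1, (j <= @ord0 N)%N ==> (h j == Some true)].
  apply/forallP => j; apply/implyP; rewrite leqn0 => /eqP j0.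
  by rewrite (_ : j = ord0) ?h0 //; apply: val_inj.
move: le_i; rewrite /frontier (bigop.bigmax_eq_arg _ root_ok).
by case: arg_maxnP => // i0 /forallP/(_ i)/implyP hi0 _ /hi0/eqP.
Qed.

Lemma frontier_succ_not_true : h ord0 = Some true ->
  forall i : 'I_N.+1, (i : nat) = (frontier h).+1 -> h i != Some true.
Proof.
move=> h0 i iE; apply/eqP => hi.
suff : (i <= frontier h)%N by rewrite iE ltnn.
apply: leq_frontier => [|j]; first by rewrite -ltnS ltn_ord.
rewrite leq_eqVlt => /orP[/eqP ji | lt_ji].
  by rewrite (val_inj ji).
by apply: frontier_true h0 _ _; rewrite -ltnS -iE.
Qed.

End Frontier.

Lemma exists_nat_threshold (R : realType) (x : R) :
  exists k : nat, forall j : nat, (x <= j%:R) = (k <= j)%N.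
Proof.
have [x_le0|x_gt0] := lerP x 0.
  by exists 0%N => j; rewrite leq0n (le_trans x_le0).
exists `|Num.ceil x|%N => j.
have ceilx_ge0 : (0 <= Num.ceil x)%R by rewrite ceil_ge0 (lt_trans _ x_gt0) // ltrN10.
transitivity (Num.ceil x <= j%:Z)%R; first by rewrite ceil_le_int pmulrn.
by rewrite -{1}(gez0_abs ceilx_ge0) lez_nat.
Qed.

Lemma powR_divn (R : realType) (x : R) (k n : nat) : 0 <= x ->
  x `^ (k%:R / n%:R) = (x `^ n%:R^-1) ^+ k.
Proof. by move=> x_ge0; rewrite -powR_mulrn ?powR_ge0 // -powRrM mulrC. Qed.

Section Binomial.
Variables (R : realType) (b : R).

Definition binom_pmf (m i : nat) : R := 'C(m, i)%:R * b ^+ i * (1 - b) ^+ (m - i).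

Lemma binom_pmf_small m i : (m < i)%N -> binom_pmf m i = 0.
Proof. by move=> lt_mi; rewrite /binom_pmf bin_small // !mul0r. Qed.

Lemma binom_pmfSS m i :
  binom_pmf m.+1 i.+1 = (1 - b) * binom_pmf m i.+1 + b * binom_pmf m i.
Proof.
rewrite /binom_pmf binS natrD subSS.
have [lt_im|le_mi] := ltnP i m; last by rewrite bin_small ?ltnS // !exprS; ring.
by rewrite -(subnSK lt_im) !exprS; ring.
Qed.

Lemma sum_binom_pmfS m (f : nat -> R) :
  \sum_(i < m.+2) binom_pmf m.+1 i * f i =
  (1 - b) * \sum_(i < m.+1) binom_pmf m i * f i
  + b * \sum_(i < m.+1) binom_pmf m i * f i.+1.
Proof.
have shift : \sum_(i < m.+1) binom_pmf m i * f i =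
    binom_pmf m 0 * f 0%N + \sum_(i < m.+1) binom_pmf m i.+1 * f i.+1.
  by rewrite big_ord_recl big_ord_recr /= (binom_pmf_small (ltnSn m)) mul0r addr0.
have step : \sum_(i < m.+1) binom_pmf m.+1 (bump 0 i) * f (bump 0 i) =
    (1 - b) * \sum_(i < m.+1) binom_pmf m i.+1 * f i.+1
    + b * \sum_(i < m.+1) binom_pmf m i * f i.+1.
  rewrite !mulr_sumr -big_split; apply: eq_bigr => i _.
  by rewrite binom_pmfSS mulrDl !mulrA.
have pmf0 : binom_pmf m.+1 0 = (1 - b) * binom_pmf m 0.
  by rewrite /binom_pmf !bin0 !subn0 exprS; ring.
by rewrite big_ord_recl step shift pmf0; ring.
Qed.

Lemma binom_mgf m (e : R) :
  \sum_(i < m.+1) binom_pmf m i * e ^+ i = (1 - b + b * e) ^+ m.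
Proof.
by rewrite exprDn; apply: eq_bigr => i _; rewrite /binom_pmf exprMn -mulr_natl; ring.
Qed.

Lemma sum_binom_pmf m : \sum_(i < m.+1) binom_pmf m i = 1.
Proof.
have := binom_mgf m 1; rewrite mulr1 subrK expr1n => <-.
by apply: eq_bigr => i _; rewrite expr1n mulr1.
Qed.

Hypothesis b01 : 0 <= b <= 1.

Lemma binom_pmf_ge0 m i : 0 <= binom_pmf m i.
Proof. by case/andP: b01 => b0 b1; rewrite !mulr_ge0 ?exprn_ge0 ?ler0n ?subr_ge0. Qed.

Definition minbin_tail (m N k : nat) : R :=
  \sum_(i < m.+1) binom_pmf m i * (k <= minn i N)%:R.

Lemma minbin_tail0 m N : minbin_tail m N 0 = 1.
Proof.
by rewrite -(sum_binom_pmf m); apply: eq_bigr => i _; rewrite leq0n mulr1.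
Qed.

Lemma minbin_tail_eq0 m N k : (m < k)%N || (N < k)%N -> minbin_tail m N k = 0.
Proof.
move=> big_k; rewrite /minbin_tail big1 // => i _.
have small : (minn i N < k)%N by have := ltn_ord i; lia.
by rewrite leqNgt small mulr0.
Qed.

Lemma minbin_tailS m N k : (0 < k)%N ->
  minbin_tail m.+1 N k <= (1 - b) * minbin_tail m N k + b * minbin_tail m N k.-1.
Proof.
move=> k_gt0; rewrite /minbin_tail (sum_binom_pmfS m (fun i => (k <= minn i N)%:R)) lerD2l.
case/andP: b01 => b0 _; apply: ler_wpM2l => //.
apply: ler_sum => i _; apply: ler_wpM2l; first exact: binom_pmf_ge0.
by rewrite ler_nat; apply/implyP => ?; lia.
Qed.

Lemma sum_binom_pmf_le_prob_minbin_ge m n (z : R) :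
  \sum_(i < m.+1 | z <= i%:R) binom_pmf m i <= prob_minbin_ge b m n (minrinf z n).
Proof.
rewrite /prob_minbin_ge big_mkcond [leRHS]big_mkcond /=; apply: ler_sum => i _.
case: ifP => [le_zi|_]; last by case: ifP; rewrite ?binom_pmf_ge0.
rewrite ifT //; case: n => [N|] //=.
by case: leqP => [_|/ltnW le_Ni]; rewrite ge_min ?le_zi ?lexx ?orbT.
Qed.

Lemma binom_lower_tail m (z lam : R) : 0 <= lam ->
  \sum_(i < m.+1 | i%:R < z) binom_pmf m i <=
  expR (lam * z) * (1 - b + b * expR (- lam)) ^+ m.
Proof.
move=> lam_ge0; rewrite -binom_mgf mulr_sumr.
rewrite [leRHS](eq_bigr (fun i : 'I_m.+1 => binom_pmf m i * expR (lam * (z - i%:R)))).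
  rewrite big_mkcond /=; apply: ler_sum => i _; case: ifP => [lt_iz|_]; last first.
    by rewrite mulr_ge0 ?expR_ge0 ?binom_pmf_ge0.
  rewrite -{1}(mulr1 (binom_pmf m i)) ler_wpM2l ?binom_pmf_ge0 //.
  apply: le_trans (expR_ge1Dx _); rewrite lerDl mulr_ge0 // subr_ge0 ltW //.
by move=> i _; rewrite mulrBr expRD -mulrN -expRM_natr mulrN mulNr mulrCA.
Qed.

(* Via [expR (- lam) <= 1 - lam + lam ^+ 2], which is
   [(1 + lam) expR (- lam) <= 1 <= 1 + lam ^+ 3] divided by [1 + lam]. *)
Lemma bernoulli_mgfN_le (lam : R) : 0 <= lam ->
  1 - b + b * expR (- lam) <= expR (b * (lam ^+ 2 - lam)).
Proof.
move=> lam_ge0; case/andP: b01 => b0 b1.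
have expN_le : expR (- lam) <= 1 - lam + lam ^+ 2.
  have lam1_gt0 : 0 < 1 + lam by lra.
  rewrite -(ler_pM2r lam1_gt0).
  apply: (@le_trans _ _ 1).
    apply: le_trans (ler_wpM2l (expR_ge0 _) (expR_ge1Dx lam)) _.
    by rewrite -expRD addNr expR0.
  have -> : (1 - lam + lam ^+ 2) * (1 + lam) = 1 + lam ^+ 3 by ring.
  by rewrite lerDl exprn_ge0.
apply: le_trans (expR_ge1Dx _); nra.
Qed.

(* Chernoff at lam = T^(-1/4): the exponent collapses to
   -(3 - b) T^(1/2) - b T^(-1/2) + b T^(-1/4) <= - T^(1/2). *)
Lemma binom_concentration m :
  1 - expR (- m.+1%:R `^ 2^-1) <=
  \sum_(i < m.+1 | b * m.+1%:R - 3 * m.+1%:R `^ (1 - 4^-1) <= i%:R) binom_pmf m i.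
Proof.
case/andP: b01 => b0 b1.
set T : R := m.+1%:R; have T_ge1 : 1 <= T by rewrite ler1n.
set u := T `^ 4%:R^-1.
have powTE k : T `^ (k%:R / 4) = u ^+ k by apply: powR_divn; lra.
have uT : u ^+ 4 = T by rewrite -powTE divff ?pnatr_eq0 // powRr1; lra.
have u2 : T `^ 2^-1 = u ^+ 2 by rewrite -powTE; congr (T `^ _); field.
have u3 : T `^ (1 - 4^-1) = u ^+ 3 by rewrite -powTE; congr (T `^ _); field.
have u_ge1 : 1 <= u by rewrite -(expr_ge1 (n := 4)) ?uT // powR_ge0.
rewrite u2 u3; set z := b * T - 3 * u ^+ 3.
have total := sum_binom_pmf m.
rewrite (bigID (fun i : 'I_m.+1 => z <= i%:R)) /= in total.
suff : \sum_(i < m.+1 | ~~ (z <= i%:R)) binom_pmf m i <= expR (- u ^+ 2) by lra.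
under eq_bigl do rewrite -ltNge.
have v_ge0 : 0 <= u^-1 by rewrite invr_ge0; lra.
apply: le_trans (binom_lower_tail m z v_ge0) _.
apply: le_trans (ler_wpM2l (expR_ge0 _) (lerXn2r m _ _ (bernoulli_mgfN_le v_ge0))) _.
- by rewrite nnegrE; have := mulr_ge0 b0 (expR_ge0 (- u^-1)); lra.
- by rewrite nnegrE expR_ge0.
rewrite -expRM_natl -expRD ler_expR.
have -> : m%:R = T - 1 by rewrite /T mulrSr addrK.
have -> : u^-1 * z + (T - 1) * (b * (u^-1 ^+ 2 - u^-1))
    = - (3 - b) * u ^+ 2 - b * u^-1 ^+ 2 + b * u^-1.
  by rewrite /z -uT; field; lra.
have v_le1 : u^-1 <= 1 by rewrite invf_le1 //; lra.
have : 1 <= u ^+ 2 by rewrite exprn_ege1.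
have : 0 <= b * u^-1 ^+ 2 by rewrite mulr_ge0 ?exprn_ge0.
nra.
Qed.

End Binomial.

Section Spread.
Variables (R : realType) (a b : R).
Hypotheses (a01 : 0 <= a <= 1) (b01 : 0 <= b <= 1).

Lemma big_opinion (F : opinion -> R) :
  \sum_x F x = F None + F (Some true) + F (Some false).
Proof.
rewrite (bigD1 None) //= (bigD1 (Some true)) //= (bigD1 (Some false)) //=.
by rewrite big1 ?addr0 ?addrA // => -[[]|].
Qed.

Lemma vertex_step_ge0 p s x : 0 <= vertex_step a b p s x.
Proof.
case/andP: a01 => a0 a1; case/andP: b01 => b0 b1.
have a1' : 0 <= 1 - a by rewrite subr_ge0.
have b1' : 0 <= 1 - b by rewrite subr_ge0.
by case: s => [s|]; case: p => [p|] /=; rewrite ?addr_ge0 ?mulr_ge0 ?ler0n.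
Qed.

Lemma vertex_step_sum1 p s : \sum_x vertex_step a b p s x = 1.
Proof.
rewrite big_opinion.
by case: s => [[]|]; case: p => [[]|] /=; rewrite ?eqxx /= ?mulr1 ?mulr0 ?addr0 ?add0r; lra.
Qed.

(* The root gets the point mass at +1, so that [step_prob] is a product kernel. *)
Definition site_kernel N (g : config N) (i : 'I_N.+1) (x : opinion) : R :=
  if val i == 0%N then (x == Some true)%:R
  else vertex_step a b (g (inord i.-1)) (g i) x.

Lemma site_kernel_ge0 N (g : config N) i x : 0 <= site_kernel g i x.
Proof. by rewrite /site_kernel; case: ifP => _; rewrite ?ler0n ?vertex_step_ge0. Qed.

Lemma site_kernel_sum1 N (g : config N) i : \sum_x site_kernel g i x = 1.
Proof.
rewrite /site_kernel; case: (val i == 0%N); last exact: vertex_step_sum1.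
by rewrite big_opinion /= addr0 add0r.
Qed.

Lemma step_probE N (g h : config N) :
  step_prob a b g h = \prod_i site_kernel g i (h i).
Proof.
rewrite [RHS](bigD1 ord0) //=; congr (_ * _).
apply: eq_big => [i|i i_neq0]; first by rewrite -val_eqE.
by rewrite /site_kernel ifN.
Qed.

Lemma step_prob_ge0 N (g h : config N) : 0 <= step_prob a b g h.
Proof. by rewrite step_probE prodr_ge0 // => i _; apply: site_kernel_ge0. Qed.

Lemma step_prob_sum1 N (g : config N) : \sum_h step_prob a b g h = 1.
Proof.
under eq_bigr do rewrite step_probE.
by rewrite -bigA_distr_bigA big1 // => i _; apply: site_kernel_sum1.
Qed.

Lemma spread_dist_ge0 N t (h : config N) : 0 <= spread_dist a b t h.
Proof.
elim: t h => [|t IH] h /=; first exact: ler0n.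
by rewrite sumr_ge0 // => g _; rewrite mulr_ge0 ?step_prob_ge0.
Qed.

Lemma spread_dist_sum1 N t : \sum_(h : config N) spread_dist a b t h = 1.
Proof.
elim: t => [|t IH] /=.
  by rewrite (bigD1 (init_config N)) //= eqxx big1 ?addr0 // => h /negbTE ->.
rewrite exchange_big /= -[RHS]IH; apply: eq_bigr => g _.
by rewrite -mulr_sumr step_prob_sum1 mulr1.
Qed.

Lemma vertex_step_None p s : vertex_step a b (Some p) s None = 0.
Proof. by case: s => [s|] /=; rewrite ?mulr0 ?addr0. Qed.

Lemma site_kernel_neq0 N (g h : config N) i :
  step_prob a b g h != 0 -> site_kernel g i (h i) != 0.
Proof. by rewrite step_probE (bigD1 i) //=; apply: contra => /eqP ->; rewrite mul0r. Qed.

Lemma spread_dist_support N t (h : config N) : spread_dist a b t h != 0 ->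
  h ord0 = Some true /\ forall i : 'I_N.+1, (i <= t)%N -> h i != None.
Proof.
elim: t h => [|t IH] h /=.
  case: (eqVneq h (init_config N)) => [-> _|_]; last by rewrite eqxx.
  by split=> [|i]; rewrite ffunE // leqn0 => ->.
move=> dist_h; have [g] : exists g, spread_dist a b t g * step_prob a b g h != 0.
  apply/existsP; apply: contraR dist_h => /existsPn all0.
  by rewrite big1 // => g _; apply/eqP/negbNE/all0.
rewrite mulf_eq0 negb_or => /andP[/IH[g0 g_reached] step_gh].
have h0 : h ord0 = Some true.
  move: (site_kernel_neq0 ord0 step_gh); rewrite /site_kernel /=.
  by case: (h ord0 =P Some true) => // _; rewrite eqxx.
split=> // i le_it; have [i0|i_gt0] := posnP i.
  by rewrite (_ : i = ord0) ?h0 //; apply: val_inj.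
have parent_reached : g (inord i.-1) != None.
  by have lt_iN := ltn_ord i; apply: g_reached; rewrite inordK; lia.
move: (site_kernel_neq0 i step_gh); rewrite /site_kernel eqn0Ngt i_gt0 /=.
case: (g (inord i.-1)) parent_reached => // p _.
by apply: contra => /eqP ->; rewrite vertex_step_None.
Qed.

Definition step_frontier_tail N (g : config N) (k : nat) : R :=
  \sum_h step_prob a b g h * (k <= frontier h)%:R.

(* The frontier is >= m as soon as v_0, ..., v_m are all +1, an event whose
   probability factorizes since the sites update independently. *)
Lemma step_frontier_tail_ge_prod N (g : config N) m : (m <= N)%N ->
  \prod_(i : 'I_N.+1 | (i <= m)%N) site_kernel g i (Some true) <= step_frontier_tail g m.
Proof.
move=> le_mN.
pose c (i : 'I_N.+1) (x : opinion) : R := if (i <= m)%N then (x == Some true)%:R else 1.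
have c_le (h : config N) : \prod_i c i (h i) <= (m <= frontier h)%:R.
  have [le_m_fr|lt_fr_m] := leqP m (frontier h).
    rewrite prodr_ile1 // => i _; rewrite /c.
    by case: ifP => _; rewrite ?ler01 ?lexx // ler0n lern1 leq_b1.
  have [i le_im /negbTE hi] : exists2 i : 'I_N.+1, (i <= m)%N & h i != Some true.
    apply/exists_inP; apply: contraLR lt_fr_m => /exists_inPn h_true.
    by rewrite -leqNgt leq_frontier // => i /h_true /negPn /eqP.
  by rewrite (bigD1 i) //= /c le_im hi mul0r.
have -> : \prod_(i : 'I_N.+1 | (i <= m)%N) site_kernel g i (Some true) =
    \sum_(h : config N) \prod_i (site_kernel g i (h i) * c i (h i)).
  rewrite -(bigA_distr_bigA (fun i x => site_kernel g i x * c i x)) big_mkcond /=.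
  apply: eq_bigr => i _; rewrite /c.
  case: ifP => _; last by under eq_bigr do rewrite mulr1; rewrite site_kernel_sum1.
  by rewrite big_opinion /= !mulr0 !mulr1 addr0 add0r.
apply: ler_sum => h _; rewrite big_split /= -step_probE.
by rewrite ler_wpM2l ?step_prob_ge0.
Qed.

Lemma site_kernel_true N (g : config N) (i : 'I_N.+1) : g ord0 = Some true ->
  (i <= frontier g)%N -> site_kernel g i (Some true) = 1.
Proof.
move=> g0 le_i_fr; rewrite /site_kernel; case: eqP => // _.
have lt_iN := ltn_ord i.
rewrite !(frontier_true g0) //=; first by rewrite !mulr1 addrC subrK.
by rewrite inordK; lia.
Qed.

Lemma site_kernel_frontier_succ N (g : config N) (i : 'I_N.+1) : g ord0 = Some true ->
  g i != None -> (i : nat) = (frontier g).+1 -> site_kernel g i (Some true) = b.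
Proof.
move=> g0 gi_reached iE; have lt_iN := ltn_ord i.
have parent_true : g (inord i.-1) = Some true.
  by apply: (frontier_true g0); rewrite inordK; lia.
have i_neq0 : (i : nat) != 0%N by rewrite iE.
rewrite /site_kernel ifN // parent_true /=.
move: (frontier_succ_not_true g0 iE) gi_reached.
by case: (g i) => [[]|] //= _ _; rewrite mulr1 mulr0 addr0.
Qed.

Lemma step_frontier_tail_rec N t (g : config N) k : spread_dist a b t g != 0 ->
  (0 < k)%N -> (k <= t)%N -> (k <= N)%N ->
  (1 - b) * (k <= frontier g)%:R + b * (k.-1 <= frontier g)%:R <= step_frontier_tail g k.
Proof.
move=> /spread_dist_support[g0 g_reached] k_gt0 le_kt le_kN.
apply: le_trans _ (step_frontier_tail_ge_prod g le_kN).
have [le_k_fr|lt_fr_k] := leqP k (frontier g).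
  rewrite (leq_trans (leq_pred k) le_k_fr) !mulr1n !mulr1 subrK.
  by rewrite big1 // => i le_ik; rewrite site_kernel_true // (leq_trans le_ik).
have [k_succ|k_far] := eqVneq k (frontier g).+1; last first.
  have -> : (k.-1 <= frontier g)%N = false by lia.
  by rewrite !mulr0n !mulr0 addr0 prodr_ge0 // => i _; apply: site_kernel_ge0.
have -> : (k.-1 <= frontier g)%N by rewrite k_succ.
rewrite mulr0n mulr1n mulr0 add0r mulr1.
have lt_kN1 : (k < N.+1)%N by [].
rewrite (bigD1 (inord k)) /= ?inordK // big1 ?mulr1 => [|i /andP[le_ik i_neq_k]].
  have k_reached : g (inord k) != None by rewrite g_reached // inordK.
  by rewrite site_kernel_frontier_succ // inordK.
apply: site_kernel_true => //; rewrite -ltnS -k_succ ltn_neqAle le_ik andbT.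
by apply: contra i_neq_k => /eqP ik; apply/eqP/val_inj; rewrite /= inordK.
Qed.

Definition frontier_tail N t (k : nat) : R :=
  \sum_(h : config N) spread_dist a b t h * (k <= frontier h)%:R.

Lemma frontier_tail_ge0 N t k : 0 <= frontier_tail N t k.
Proof. by rewrite sumr_ge0 // => h _; rewrite mulr_ge0 ?spread_dist_ge0 ?ler0n. Qed.

Lemma frontier_tail0 N t : frontier_tail N t 0 = 1.
Proof.
by rewrite -(spread_dist_sum1 N t); apply: eq_bigr => h _; rewrite leq0n mulr1.
Qed.

Lemma frontier_tailS N t k : (0 < k)%N -> (k <= t)%N -> (k <= N)%N ->
  (1 - b) * frontier_tail N t k + b * frontier_tail N t k.-1 <= frontier_tail N t.+1 k.
Proof.
move=> k_gt0 le_kt le_kN.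
have -> : frontier_tail N t.+1 k =
    \sum_(g : config N) spread_dist a b t g * step_frontier_tail g k.
  rewrite /frontier_tail /=; under eq_bigr do rewrite mulr_suml.
  rewrite exchange_big /=; apply: eq_bigr => g _.
  by rewrite mulr_sumr; apply: eq_bigr => h _; rewrite mulrA.
rewrite /frontier_tail !mulr_sumr -big_split /=; apply: ler_sum => g _.
have [->|dist_g] := eqVneq (spread_dist a b t g) 0; first by rewrite !mul0r !mulr0 addr0.
rewrite mulrCA (mulrCA b) -mulrDr ler_wpM2l ?spread_dist_ge0 //.
exact: step_frontier_tail_rec dist_g k_gt0 le_kt le_kN.
Qed.

Lemma minbin_tail_le_frontier_tail m N k :
  minbin_tail b m N k <= frontier_tail N m.+1 k.
Proof.
case/andP: b01 => b0 b1.
elim: m k => [|m IH] [|k]; rewrite ?minbin_tail0 ?frontier_tail0 //.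
  by rewrite minbin_tail_eq0 ?frontier_tail_ge0.
have [le_km|lt_mk] := leqP k.+1 m.+1;
  last by rewrite minbin_tail_eq0 ?lt_mk ?frontier_tail_ge0.
have [le_kN|lt_Nk] := leqP k.+1 N;
  last by rewrite minbin_tail_eq0 ?lt_Nk ?orbT ?frontier_tail_ge0.
apply: le_trans (minbin_tailS b01 m N (ltn0Sn k)) _.
apply: le_trans _ (frontier_tailS (ltn0Sn k) le_km le_kN).
by rewrite lerD // ler_wpM2l ?subr_ge0.
Qed.

Lemma prob_minbin_ge_le_prob_frontier_ge n t x : (0 < t)%N ->
  prob_minbin_ge b t.-1 n x <= prob_frontier_ge a b n t x.
Proof.
case: t => // m _; have [k xk] := exists_nat_threshold x.
have -> : prob_frontier_ge a b n m.+1 x = frontier_tail (trunc n m.+1) m.+1 k.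
  rewrite /prob_frontier_ge big_mkcond; apply: eq_bigr => h _.
  by rewrite xk; case: leqP; rewrite ?mulr1 ?mulr0.
have -> : prob_minbin_ge b m n x = minbin_tail b m (trunc n m.+1) k.
  rewrite /prob_minbin_ge big_mkcond; apply: eq_bigr => i _.
  have lt_im1 := ltn_ord i.
  have -> : minninf i n = minn i (trunc n m.+1) by case: n => [N|] /=; lia.
  by rewrite xk; case: leqP; rewrite ?mulr1 ?mulr0.
exact: minbin_tail_le_frontier_tail.
Qed.

End Spread.

Theorem mainTheorem1 (R : realType) (a b : R) :
  0 < a < 1 -> 0 < b < 1 ->
  (forall (n : natinf) (t : nat) (x : R), (1 <= t)%N ->
     prob_minbin_ge b t.-1 n x <= prob_frontier_ge a b n t x)
  /\
  (exists K c1 c2 c3 : R, [/\ 0 < K, 0 < c1, 0 < c2 & 0 < c3] /\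
     forall (n : natinf) (t : nat), (1 <= t)%N ->
       1 - expR (- (c1 * (t%:R `^ c2))) <=
       prob_frontier_ge a b n t
         (minrinf (b * t%:R - K * (t%:R `^ (1 - c3))) n)).
Proof.
move=> /andP[a0 a1] /andP[b0 b1].
have a01 : 0 <= a <= 1 by rewrite (ltW a0) (ltW a1).
have b01 : 0 <= b <= 1 by rewrite (ltW b0) (ltW b1).
split=> [n t x|]; first exact: prob_minbin_ge_le_prob_frontier_ge.
exists 3, 1, 2^-1, 4^-1; split; first by split; rewrite ?invr_gt0 ?ltr0n ?ltr01.
move=> n [|m] // _; rewrite mul1r.
apply: le_trans (prob_minbin_ge_le_prob_frontier_ge a01 b01 n _ (ltn0Sn m)).
exact: le_trans (binom_concentration b01 m) (sum_binom_pmf_le_prob_minbin_ge b01 _ _ _).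
Qed.
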